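(* Let $m\geq 3$ and let $S(m)$ be the star with center $r$ and leaves $1,2,\dots,m$, with variables $x_r,x_1,\dots,x_m$. Then $\gamma(S(m))=2$; for each $1\leq k\leq m-2$, \[ I_{2+k}(S(m),X)=\left\langle \prod_{s=1}^k x_{j_s}\;\middle|\; 1\leq j_1<\cdots<j_k\leq m\right\rangle; \] and \[ I_{m+1}(S(m),X)=\Big\langle x_rx_1\cdots x_m-\sum_{i=1}^m \prod_{j\neq i} x_j\Big\rangle. \]
   Context: For a graph $G$ with vertex set $V$, $L(G,X_G)$ is the matrix with diagonal entries $x_u$ ($u\in V$) and off-diagonal entries $-m_{uv}$, $m_{uv}$ the number of edges between $u$ and $v$; $I_j(G,X_G)\subseteq\mathbb{Z}[X_G]$ is the ideal generated by all $j\times j$ minors of $L(G,X_G)$, and $\gamma(G)=\max\{j\mid I_j(G,X_G)=\mathbb{Z}[X_G]\}$. *)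

From HB Require Import structures.
From mathcomp Require Import all_boot all_order all_algebra.
From mathcomp Require Import mpoly.
Set Implicit Arguments. Unset Strict Implicit. Unset Printing Implicit Defensive.
Import GRing.Theory.
Local Open Scope ring_scope.

Definition in_ideal (R : comRingType) (gens : R -> Prop) (p : R) : Prop :=
  exists s : seq (R * R),
    (forall q, q \in s -> gens q.2) /\ p = \sum_(q <- s) q.1 * q.2.

Definition ideal_eq (R : comRingType) (A B : R -> Prop) : Prop :=
  forall p, in_ideal A p <-> in_ideal B p.

Definition genLap (n : nat) (mult : 'I_n -> 'I_n -> nat) : 'M[{mpoly int[n]}]_n :=
  \matrix_(u, v) (if u == v then 'X_u else - (mult u v)%:R).

Definition is_minor (R : comRingType) (n j : nat) (A : 'M[R]_n) (p : R) : Prop :=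
  exists (f g : 'I_j -> 'I_n),
    (forall a b : 'I_j, (a < b)%N -> (f a < f b)%N) /\
    (forall a b : 'I_j, (a < b)%N -> (g a < g b)%N) /\
    p = \det (mxsub f g A).

Definition Iminors (n : nat) (mult : 'I_n -> 'I_n -> nat) (j : nat) :
  {mpoly int[n]} -> Prop := in_ideal (is_minor j (genLap mult)).

(* An ideal is the whole ring iff it contains 1. *)
Definition ideal_trivial (n : nat) (mult : 'I_n -> 'I_n -> nat) (j : nat) : Prop :=
  Iminors mult j 1.

Definition gamma_is (n : nat) (mult : 'I_n -> 'I_n -> nat) (g : nat) : Prop :=
  ideal_trivial mult g /\ forall j, (g < j)%N -> ~ ideal_trivial mult j.

(* The star S(m): vertex set 'I_(m.+1), vertex 0 is the center r, vertex
   (lift ord0 i) = i.+1 is the leaf i+1 (for i : 'I_m).  Exactly one edge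
   between the center and each leaf, no other edges. *)
Definition star_mult (m : nat) (u v : 'I_m.+1) : nat :=
  ((u == ord0) != (v == ord0) : bool).

Definition xr (m : nat) : {mpoly int[m.+1]} := 'X_ord0.
Definition xleaf (m : nat) (i : 'I_m) : {mpoly int[m.+1]} := 'X_(lift ord0 i).

From HB Require Import structures.
From mathcomp Require Import all_boot all_order all_algebra.
From mathcomp Require Import fingroup perm mpoly zify.
Import GRing.Theory.
Local Open Scope ring_scope.
Set Implicit Arguments. Unset Strict Implicit. Unset Printing Implicit Defensive.

(* A term of the Leibniz expansion of a (k+2)-minor of L(S(m)) is a product
   of entries taken from k+2 distinct rows and k+2 distinct columns.  The
   center r occupies at most one row and one column and the off-diagonal
   entries between two leaves vanish, so a nonzero term contains at least k
   diagonal leaf entries x_l and is a multiple of a product of k leaf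
   variables.  Conversely, for two leaves a, b outside a k-set S of leaves,
   the minor with rows a, S, r and columns r, S, b is triangular with
   diagonal -1, x_S, -1.  For j >= 3 every generator of I_j vanishes at
   X = 0, so I_j is proper.  The only permutations contributing to the full
   determinant are the identity and the transpositions (r l). *)

Section Ideals.
Variable R : comNzRingType.
Implicit Types (G H : R -> Prop) (p : R).

Lemma in_ideal0 G : in_ideal G 0.
Proof. by exists [::]; rewrite big_nil. Qed.

Lemma in_ideal_gen G p : G p -> in_ideal G p.
Proof.
move=> Gp; exists [:: (1, p)]; rewrite big_seq1 mul1r; split=> // q.
by rewrite inE => /eqP ->.
Qed.

Lemma in_idealD G p p' : in_ideal G p -> in_ideal G p' -> in_ideal G (p + p').
Proof.
move=> [s [Gs ->]] [t [Gt ->]]; exists (s ++ t); rewrite big_cat; split=> // r.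
by rewrite mem_cat => /orP[/Gs|/Gt].
Qed.

Lemma in_idealMl G c p : in_ideal G p -> in_ideal G (c * p).
Proof.
move=> [s [Gs ->]]; exists [seq (c * q.1, q.2) | q <- s]; split.
  by move=> _ /mapP[q qs ->]; exact: (Gs q qs).
by rewrite big_map mulr_sumr; apply: eq_bigr => q _; rewrite mulrA.
Qed.

Lemma in_idealMr G c p : in_ideal G p -> in_ideal G (p * c).
Proof. by rewrite mulrC; apply: in_idealMl. Qed.

Lemma in_ideal_sum G (I : finType) (P : pred I) (F : I -> R) :
  (forall i, P i -> in_ideal G (F i)) -> in_ideal G (\sum_(i | P i) F i).
Proof. by apply: big_ind; [exact: in_ideal0 | exact: in_idealD]. Qed.

Lemma in_ideal_trans G H p :
  (forall q, G q -> in_ideal H q) -> in_ideal G p -> in_ideal H p.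
Proof.
move=> GH [s [Gs ->]]; rewrite big_seq; apply: big_ind => [|q r|q qs].
- exact: in_ideal0.
- exact: in_idealD.
- by apply/in_idealMl/GH/Gs.
Qed.

Lemma ideal_eq_in_ideal G H :
  (forall p, G p -> in_ideal H p) -> (forall p, H p -> in_ideal G p) ->
  ideal_eq (in_ideal G) H.
Proof.
move=> GH HG p; split; apply: in_ideal_trans => q; first exact: in_ideal_trans.
by move/HG; apply: in_ideal_gen.
Qed.

End Ideals.

Section Minors.
Variables (R : comNzRingType) (n : nat) (A : 'M[R]_n).

Lemma incr_inj j (f : 'I_j -> 'I_n) :
  (forall a b : 'I_j, (a < b)%N -> (f a < f b)%N) -> injective f.
Proof.
move=> f_incr a b fab.
by case: (ltngtP a b) => [/f_incr | /f_incr | /val_inj]; rewrite ?fab ?ltnn.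
Qed.

Lemma enum_val_incr (X : {set 'I_n}) (a b : 'I_#|X|) :
  (a < b)%N -> (enum_val a < enum_val b)%N.
Proof.
move=> ab; have x0 : 'I_n := enum_val a; rewrite !(enum_val_nth x0).
have lt_trans : transitive (fun x y : 'I_n => (x < y)%N).
  by move=> ? ? ?; apply: ltn_trans.
have sorted_enum : sorted (fun x y : 'I_n => (x < y)%N) (enum X).
  rewrite /enum_mem -enumT; apply: sorted_filter => //.
  by have := iota_ltn_sorted 0 n; rewrite -val_enum_ord sorted_map.
by apply: (sorted_ltn_nth lt_trans x0 sorted_enum); rewrite // inE -cardE.
Qed.

Lemma injective_sorted j (f : 'I_j -> 'I_n) : injective f ->
  exists f' : 'I_j -> 'I_n, exists s : 'S_j,
    (forall a b : 'I_j, (a < b)%N -> (f' a < f' b)%N) /\ f =1 f' \o s.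
Proof.
move=> f_inj; pose X := f @: [set: 'I_j].
have cardX : #|X| = j by rewrite card_imset // cardsT card_ord.
pose f' i := enum_val (cast_ord (esym cardX) i).
have fX i : f i \in X by apply: imset_f; rewrite inE.
pose rk i := cast_ord cardX (enum_rank_in (fX i) (f i)).
have f'rk i : f' (rk i) = f i by rewrite /f' /rk cast_ordK enum_rankK_in.
have rk_inj : injective rk by move=> a b e; apply: f_inj; rewrite -!f'rk e.
exists f', (perm rk_inj); split => [a b ab|i]; first exact: enum_val_incr.
by rewrite /= permE f'rk.
Qed.

Lemma det_mxsub_perm j (f g : 'I_j -> 'I_n) (s t : 'S_j) :
  \det (mxsub (f \o s) (g \o t) A)
  = (-1) ^+ s * (-1) ^+ (t^-1)%g * \det (mxsub f g A).
Proof.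
have -> : mxsub (f \o s) (g \o t) A = row_perm s (col_perm t (mxsub f g A)).
  by apply/matrixP => a b; rewrite !mxE.
by rewrite row_permE col_permE !det_mulmx !det_perm mulrA mulrAC.
Qed.

Lemma det_mxsub_in_minors j (f g : 'I_j -> 'I_n) :
  injective f -> injective g -> in_ideal (is_minor j A) (\det (mxsub f g A)).
Proof.
move=> /injective_sorted[f' [s [f'_incr fE]]] /injective_sorted[g' [t [g'_incr gE]]].
rewrite (eq_mxsub _ _ fE gE) det_mxsub_perm.
by apply/in_idealMl/in_ideal_gen; exists f', g'.
Qed.

Lemma minors_in_ideal j (G : R -> Prop) :
  (forall f g : 'I_j -> 'I_n, injective f -> injective g ->
     in_ideal G (\prod_i A (f i) (g i))) ->
  forall p, is_minor j A p -> in_ideal G p.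
Proof.
move=> G_terms _ [f [g [f_incr [g_incr ->]]]]; apply: in_ideal_sum => s _.
apply: in_idealMl; under eq_bigr do rewrite mxE.
by apply: G_terms (incr_inj f_incr) (inj_comp (incr_inj g_incr) (@perm_inj _ s)).
Qed.

Lemma ideal_full_minors : ideal_eq (in_ideal (is_minor n A)) (fun p => p = \det A).
Proof.
apply: ideal_eq_in_ideal => [_ [f [g [f_incr [g_incr ->]]]]|_ ->]; last first.
  by apply: in_ideal_gen; exists id, id; rewrite mxsub_id.
have idE (h : 'I_n -> 'I_n) (h_inj : injective h) : h =1 id \o perm h_inj.
  by move=> i; rewrite /= permE.
rewrite (eq_mxsub _ _ (idE _ (incr_inj f_incr)) (idE _ (incr_inj g_incr))).
by rewrite det_mxsub_perm mxsub_id; apply/in_idealMl/in_ideal_gen.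
Qed.

End Minors.

Section StarLaplacian.
Variable m : nat.
Local Notation P := {mpoly int[m.+1]}.
Local Notation A := (genLap (@star_mult m)).
Local Notation leaf := (@lift m.+1 ord0).

Lemma star_lapE u v :
  A u v = if u == v then 'X_u else if (u == ord0) != (v == ord0) then -1 else 0.
Proof.
rewrite mxE /star_mult; case: eqP => // _.
by case: (_ != _); rewrite ?oppr0.
Qed.

Lemma star_lap_diag u : A u u = 'X_u.
Proof. by rewrite star_lapE eqxx. Qed.

Lemma star_lap_offdiag u v : u != v -> u != ord0 -> v != ord0 -> A u v = 0.
Proof. by move=> uv u0 v0; rewrite star_lapE (negPf uv) (negPf u0) (negPf v0). Qed.

Lemma leaf_eq0 l : (leaf l == ord0) = false.
Proof. by apply/negbTE; rewrite eq_sym neq_lift. Qed.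

Lemma star_lap_center_leaf l : A ord0 (leaf l) = -1.
Proof. by rewrite star_lapE eq_sym !leaf_eq0 eqxx. Qed.

Lemma star_lap_leaf_center l : A (leaf l) ord0 = -1.
Proof. by rewrite star_lapE !leaf_eq0 eqxx. Qed.

Lemma star_lap_leaves l l' : l != l' -> A (leaf l) (leaf l') = 0.
Proof.
by move=> ll'; apply: star_lap_offdiag; rewrite ?leaf_eq0 ?(inj_eq lift_inj).
Qed.

Definition leaf_products k : P -> Prop :=
  fun p => exists S : {set 'I_m}, #|S| = k /\ p = \prod_(i in S) xleaf i.

Lemma leaf_prod_in_ideal k (T : {set 'I_m}) :
  (k <= #|T|)%N -> in_ideal (leaf_products k) (\prod_(i in T) xleaf i).
Proof.
case/card_geqP => s [s_uniq s_size sT].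
have sT' : [set x in s] \subset T by apply/subsetP => x; rewrite inE; exact: sT.
rewrite (big_setID [set x in s]) (setIidPr sT') /=; apply/in_idealMr/in_ideal_gen.
by exists [set x in s]; rewrite cardsE (card_uniqP s_uniq).
Qed.

Lemma var_prod_in_ideal k (U : {set 'I_m.+1}) : ord0 \notin U ->
  (k <= #|U|)%N -> in_ideal (leaf_products k) (\prod_(u in U) 'X_u).
Proof.
move=> U0; have UE : U = leaf @: (leaf @^-1: U).
  apply/setP => u; case: (unliftP ord0 u) => [l ->|->]; last first.
    rewrite (negPf U0); apply/esym/negbTE/negP => /imsetP[l _ /eqP].
    by rewrite eq_sym leaf_eq0.
  by rewrite mem_imset ?inE //; exact: lift_inj.
rewrite UE big_imset /=; last by move=> ? ? _ _; exact: lift_inj.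
by rewrite (card_imset _ lift_inj); apply: leaf_prod_in_ideal.
Qed.

Lemma exists_offdiag_leaf_entry k (h1 h2 : 'I_k.+2 -> 'I_m.+1) :
  injective h1 -> injective h2 ->
  (#|[set i | (h1 i == h2 i) && (h1 i != ord0)]| < k)%N ->
  exists i, [&& h1 i != h2 i, h1 i != ord0 & h2 i != ord0].
Proof.
set D := [set i | _]; move=> h1_inj h2_inj small_D.
have preim_center (h : 'I_k.+2 -> 'I_m.+1) :
    injective h -> (#|h @^-1: [set ord0]| <= 1)%N.
  move=> h_inj; rewrite -(card_imset _ h_inj) -(cards1 (ord0 : 'I_m.+1)).
  by apply: subset_leq_card; apply/subsetP => _ /imsetP[x + ->]; rewrite !inE.
pose C1 := h1 @^-1: [set ord0]; pose C2 := h2 @^-1: [set ord0].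
apply/existsP; apply: contraTT small_D => /existsPn no_offdiag; rewrite -leqNgt.
have cover : [set: 'I_k.+2] \subset D :|: C1 :|: C2.
  apply/subsetP => i _; move: (no_offdiag i); rewrite !inE.
  by case: (h1 i == h2 i); case: (h1 i == ord0); case: (h2 i == ord0).
have bound : (#|D :|: C1 :|: C2| <= #|D| + 1 + 1)%N.
  apply: leq_trans (leq_card_setU _ _).1 _.
  apply: leq_add; last exact: preim_center.
  apply: leq_trans (leq_card_setU _ _).1 _; exact/leq_add/preim_center.
have := leq_trans (subset_leq_card cover) bound.
by rewrite cardsT card_ord !addn1 !ltnS.
Qed.

Lemma star_lap_term_in_ideal k (h1 h2 : 'I_k.+2 -> 'I_m.+1) :
  injective h1 -> injective h2 ->
  in_ideal (leaf_products k) (\prod_i A (h1 i) (h2 i)).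
Proof.
move=> h1_inj h2_inj; set D := [set i | (h1 i == h2 i) && (h1 i != ord0)].
case: (leqP k #|D|) => [large_D | /(exists_offdiag_leaf_entry h1_inj h2_inj)].
  rewrite (bigID (mem D)) /=; apply: in_idealMr.
  have -> : \prod_(i in D) A (h1 i) (h2 i) = \prod_(u in h1 @: D) 'X_u.
    rewrite big_imset /=; last by move=> ? ? _ _; apply: h1_inj.
    by apply: eq_bigr => i; rewrite inE => /andP[/eqP <- _]; rewrite star_lap_diag.
  apply: var_prod_in_ideal; last by rewrite card_imset.
  by apply/imsetP => -[i]; rewrite inE => /andP[_ /negP h1i0 /esym/eqP].
move=> [i /and3P[h12 h1i h2i]].
by rewrite (bigD1 i) //= star_lap_offdiag // mul0r; apply: in_ideal0.
Qed.

Lemma star_minor_in_ideal k p :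
  is_minor k.+2 A p -> in_ideal (leaf_products k) p.
Proof. exact/minors_in_ideal/star_lap_term_in_ideal. Qed.

Lemma leaf_products_vanish_at0 k p :
  in_ideal (leaf_products k.+1) p -> meval (fun _ => 0) p = 0.
Proof.
move=> [s [s_gen ->]]; rewrite rmorph_sum big1_seq //= => q /s_gen[S [cardS ->]].
have [l lS] : exists l, l \in S by apply/card_gt0P; rewrite cardS.
by rewrite mevalM rmorph_prod (bigD1 l) //= /xleaf mevalXU mul0r mulr0.
Qed.

Section PathMinor.
Variables (k : nat) (a b : 'I_m) (s : seq 'I_m).
Hypotheses (size_s : size s = k) (path_uniq : uniq (a :: rcons s b)).

(* [path_vertex ord_max] lists the rows a, s, r and [path_vertex ord0] the
   columns r, s, b of a minor whose diagonal is -1, x_s, -1. *)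
Definition path_vertex (c i : 'I_k.+2) : 'I_m.+1 :=
  if i == c then ord0 else leaf (nth a (a :: rcons s b) i).

Lemma size_path : size (a :: rcons s b) = k.+2.
Proof. by rewrite /= size_rcons size_s. Qed.

Lemma path_nth_inj (i j : 'I_k.+2) :
  nth a (a :: rcons s b) i = nth a (a :: rcons s b) j -> i = j.
Proof.
move/(uniqP a path_uniq); rewrite !inE size_path.
by move=> /(_ (ltn_ord i) (ltn_ord j))/val_inj.
Qed.

Lemma path_vertex_inj c : injective (path_vertex c).
Proof.
move=> i j; rewrite /path_vertex.
by case: eqP => [-> | _]; case: eqP => [-> // | _] // /lift_inj/path_nth_inj.
Qed.

Let M := mxsub (path_vertex ord_max) (path_vertex ord0) A.

Lemma path_minor_trig : is_trig_mx M.
Proof.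
apply/is_trig_mxP => i j ij; rewrite mxE /path_vertex.
case: eqP => [i_max | _]; first by move: ij; rewrite i_max ltnNge -ltnS ltn_ord.
case: eqP => [j0 | _]; first by move: ij; rewrite j0.
apply: star_lap_leaves; apply: contraTneq ij => /path_nth_inj ->.
by rewrite ltnn.
Qed.

Lemma det_path_minor : \det M = \prod_(l <- s) xleaf l.
Proof.
have ME i : M i i = A (path_vertex ord_max i) (path_vertex ord0 i) by rewrite mxE.
have first_entry : M ord0 ord0 = -1.
  by rewrite ME /path_vertex /= star_lap_leaf_center.
have last_entry : M ord_max ord_max = -1.
  rewrite ME /path_vertex /= -[k in nth a _ k]size_s nth_rcons ltnn eqxx.
  exact: star_lap_center_leaf.
have mid_entry (i : 'I_k) :
    M (lift ord0 (widen_ord (leqnSn k) i)) (lift ord0 (widen_ord (leqnSn k) i))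
    = xleaf (nth a s i).
  have not_max : (lift ord0 (widen_ord (leqnSn k) i) == ord_max) = false.
    by rewrite -val_eqE /= /bump leq0n add1n eqSS ltn_eqF.
  by rewrite ME /path_vertex not_max /= nth_rcons size_s ltn_ord star_lap_diag.
have lift_max : lift ord0 ord_max = ord_max :> 'I_k.+2 by apply: val_inj.
rewrite (det_trig path_minor_trig) big_ord_recl big_ord_recr /= lift_max.
rewrite first_entry last_entry mulN1r mulrN1 opprK (big_nth a) size_s big_mkord.
by apply: eq_bigr => i _; rewrite mid_entry.
Qed.
End PathMinor.

Lemma leaf_prod_in_minors k (S : {set 'I_m}) : #|S| = k -> (k.+2 <= m)%N ->
  in_ideal (is_minor k.+2 A) (\prod_(i in S) xleaf i).
Proof.
move=> cardS km; have : (1 < #|~: S|)%N.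
  by have := cardsC S; rewrite card_ord cardS; lia.
case/card_gt1P => a [b [+ + ab]]; rewrite !inE => aS bS.
have path_uniq : uniq (a :: rcons (enum S) b).
  rewrite /= mem_rcons !inE mem_enum rcons_uniq mem_enum enum_uniq.
  by rewrite negb_or ab aS bS.
have size_s : size (enum S) = k by rewrite -cardE.
rewrite -big_enum -(det_path_minor size_s path_uniq).
by apply: det_mxsub_in_minors; apply: path_vertex_inj.
Qed.

Definition center_swaps : {set 'S_m.+1} := [set tperm ord0 (leaf l) | l : 'I_m].

Lemma star_perm_classification (s : 'S_m.+1) :
  (forall j, j != ord0 -> s j != j -> s j = ord0) ->
  s = 1%g \/ s \in center_swaps.
Proof.
move=> to_center.
have fixed j y : j != ord0 -> s y = ord0 -> j != y -> s j = j.
  move=> j0 sy jy; apply/eqP; apply: contraNT jy => sj.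
  by apply/eqP/(@perm_inj _ s); rewrite sy to_center.
have [s0 | s0] := eqVneq (s ord0) ord0.
  left; apply/permP => j; rewrite perm1.
  by have [-> // | j0] := eqVneq j ord0; exact: (fixed _ _ j0 s0 j0).
right; case: (unliftP ord0 (s ord0)) s0 => [l sl _ | ->]; last by rewrite eqxx.
have sl0 : s (leaf l) = ord0.
  apply: to_center; first by rewrite leaf_eq0.
  by rewrite -{2}sl (inj_eq (@perm_inj _ s)) leaf_eq0.
apply/imsetP; exists l => //; apply/permP => j.
case: tpermP => [-> | -> | /eqP j0 /eqP jl] //; exact: (fixed _ _ j0 sl0 jl).
Qed.

Lemma star_lap_term_eq0 (s : 'S_m.+1) :
  s != 1%g -> s \notin center_swaps -> \prod_j A j (s j) = 0.
Proof.
move=> s1 sC; case: (pickP [pred j | [&& j != ord0, s j != j & s j != ord0]]).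
  move=> j /and3P[j0 sj sj0].
  by rewrite (bigD1 j) //= star_lap_offdiag ?mul0r // eq_sym.
move=> no_leaf_edge; have [s_id | s_swap] : s = 1%g \/ s \in center_swaps.
- apply: star_perm_classification => j j0 sj; apply/eqP.
  by move: (no_leaf_edge j); rewrite /= j0 sj /= => /negbFE.
- by rewrite s_id eqxx in s1.
- by rewrite s_swap in sC.
Qed.

Lemma det_star_lap : \det A = xr m * \prod_(i < m) xleaf i
                              - \sum_(i < m) \prod_(j < m | j != i) xleaf j.
Proof.
rewrite /determinant (bigD1 1%g) //=; congr (_ + _).
  rewrite odd_perm1 expr0 mul1r big_ord_recl perm1 star_lap_diag; congr (_ * _).
  by apply: eq_bigr => i _; rewrite perm1 star_lap_diag.
rewrite (bigID (mem center_swaps)) /= [X in _ + X]big1 ?addr0; last first.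
  by move=> s /andP[s1 sC]; rewrite star_lap_term_eq0 ?mulr0.
rewrite (eq_bigl (mem center_swaps)); last first.
  move=> s /=; apply: andb_idl => /imsetP[l _ ->]; apply/eqP => /permP/(_ ord0).
  by rewrite tpermL perm1 => /eqP; rewrite leaf_eq0.
rewrite big_imset /=; last first.
  by move=> l l' _ _ /permP/(_ ord0); rewrite !tpermL; apply: lift_inj.
rewrite -sumrN; apply: eq_bigr => l _.
rewrite odd_tperm eq_sym leaf_eq0 expr1 big_ord_recl tpermL star_lap_center_leaf.
rewrite (bigD1 l) //= tpermR star_lap_leaf_center !mulN1r opprK.
congr (- _); apply: eq_bigr => i il.
by rewrite tpermD ?star_lap_diag // eq_sym ?leaf_eq0 // (inj_eq lift_inj).
Qed.

End StarLaplacian.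

Theorem theorem5p1 (m : nat) (hm : (3 <= m)%N) :
  gamma_is (@star_mult m) 2
  /\ (forall k : nat, (1 <= k)%N -> (k <= m - 2)%N ->
        ideal_eq (Iminors (@star_mult m) (2 + k))
          (fun p => exists S : {set 'I_m},
               #|S| = k /\ p = \prod_(i in S) xleaf i))
  /\ ideal_eq (Iminors (@star_mult m) m.+1)
       (fun p => p = xr m * \prod_(i < m) xleaf i
                     - \sum_(i < m) \prod_(j < m | j != i) xleaf j).
Proof.
split; [split | split].
- by have := @leaf_prod_in_minors m 0 set0 (cards0 _) (ltnW hm); rewrite big_set0.
- case=> [|[|[|k]]] // _ I_trivial.
  have := in_ideal_trans (@star_minor_in_ideal m k.+1) I_trivial.
  by move/leaf_products_vanish_at0; rewrite meval1 => /eqP; rewrite oner_eq0.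
- move=> k _ k_le; apply: ideal_eq_in_ideal => p; first exact: star_minor_in_ideal.
  by move=> [S [cardS ->]]; apply: (leaf_prod_in_minors cardS); lia.
- by have := ideal_full_minors (genLap (@star_mult m)); rewrite det_star_lap.
Qed.
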